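(* Consider the principal–agent model described in the context. Let $(a^{\mathcal J},u^{\mathcal J})$ be a maximizer of $\max_{(a,u)\in\mathcal{J}}\{\mathbb{E}[X(a)\mid a]-c(a)-u\}$. Suppose the quota-bonus contract $s_q(x)=b\,\mathbf{1}_{\{x\ge q\}}$ (with $q,b\in[0,\infty)$) implements $(a^{\mathcal J},u^{\mathcal J})$. Then $b=\dfrac{c(a^{\mathcal J})+u^{\mathcal J}}{1-F(q\mid a^{\mathcal J})}$, and either $q=L(a^{\mathcal J})$, or $q>L(a^{\mathcal J})$ and \[ \frac{-F_a(q\mid a^{\mathcal J})}{1-F(q\mid a^{\mathcal J})}=\frac{c'(a^{\mathcal J})}{c(a^{\mathcal J})+u^{\mathcal J}}. \]
   Context: Model. An agent chooses effort $a\ge 0$. The outcome $X(a)$ is a continuous random variable with support $[L(a),\bar x]$, where $\bar x>0$ is fixed (possibly $+\infty$) and $L:[0,\infty)\to[0,\bar x)$ is nondecreasing on $[0,\infty)$ and continuously differentiable on $(0,\infty)$. Effort costs $c(a)$, where $c:[0,\infty)\to[0,\infty)$ is twice differentiable with $c'(a)>0$, $c''(a)\ge 0$. $X(a)$ has density $f(x\mid a)$ and cdf $F(x\mid a)$; for each fixed $x\in(L(a),\bar x]$, $f(x\mid a)$ and $F(x\mid a)$ are differentiable in $a>0$ with derivatives $f_a,F_a$, both continuous on $(L(a),\bar x]\times(0,\infty)$, and $F_a<0$ there. A contract is $s:\mathbb{R}_{\ge0}\to\mathbb{R}_{\ge0}$ (LL: $s\ge0$). $E^P(a,s)=\int_{L(a)}^{\bar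 x}[x-s(x)]f(x\mid a)\,dx$, $E^A(a,s)=\int_{L(a)}^{\bar x}s(x)f(x\mid a)\,dx-c(a)$, reservation utility $u_0\ge0$. Constraints: (IC) the chosen effort $a_s\in\arg\max_{a\ge0}E^A(a,s)$; (IR) $E^A(a_s,s)\ge u_0$; (LL). Indifferent agents choose the effort most favorable to the principal. Standing assumption: (i) $\mathbb{E}[X(a)\mid a]<\infty$ for all $a\ge0$ and is continuous in $a$ on $[0,\infty)$; (ii) $\lim_{a\to\infty}\{\mathbb{E}[X(a)\mid a]-c(a)\}=-\infty$; (iii) $a\mapsto\sup_{x\in(L(a),\bar x]}f_a(x\mid a)/f(x\mid a)$ is continuous on $(0,\infty)$; (iv) for any contract $s$ with $\mathbb{E}[s(X(a))\mid a]<\infty$, the limit $h\uparrow0$ of $\int_{L(a)}^{\bar x}\frac{f(x\mid a+h)-f(x\mid a)}{h}s(x)\,dx$ may be taken inside the integral. A contract $s$ implements $(a,u)$ if $(a,s)$ satisfies IC, IR, LL and $u=E^A(a,s)$. $\mathcal{J}=\{(a,u)\mid a>0,\ u\ge u_0,\ \sup_{x\in(L(a),\bar x]} f_a(x\mid a)/f(x\mid a)\ge c'(a)/(c(a)+u)\}\cup\{(0,u)\mid u\ge u_0\}$. *)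

From HB Require Import structures.
From mathcomp Require Import all_boot all_order all_algebra.
From mathcomp Require Import all_classical all_reals all_analysis.
Set Implicit Arguments. Unset Strict Implicit. Unset Printing Implicit Defensive.
Import Order.TTheory GRing.Theory Num.Theory.
Import numFieldNormedType.Exports.
Local Open Scope classical_set_scope.
Local Open Scope ring_scope.

Section Model.
Variable R : realType.

(* support [L(a), xbar] of X(a); xbar may be +oo *)
Definition supp (xbar : \bar R) (L : R -> R) (a : R) : set R :=
  [set x | L a <= x /\ (x%:E <= xbar)%E].
Definition supp_o (xbar : \bar R) (L : R -> R) (a : R) : set R :=
  [set x | L a < x /\ (x%:E <= xbar)%E].

Definition expect (xbar : \bar R) (L : R -> R) (f : R -> R -> R)
    (g : R -> R) (a : R) : \bar R :=
  (\int[lebesgue_measure]_(x in supp xbar L a) (g x * f x a)%:E)%E.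

Definition EA xbar L f (c : R -> R) (s : R -> R) (a : R) : \bar R :=
  (expect xbar L f s a - (c a)%:E)%E.

Definition EP xbar L f (s : R -> R) (a : R) : \bar R :=
  expect xbar L f (fun x => x - s x) a.

(* s implements (a,u): IC, IR, LL and u = E^A(a,s) *)
Definition implements xbar L f c (u0 : R) (s : R -> R) (a u : R) : Prop :=
  [/\ 0 <= a /\ (forall a', 0 <= a' -> (EA xbar L f c s a' <= EA xbar L f c s a)%E),
      (u0%:E <= EA xbar L f c s a)%E,
      (forall x, 0 <= x -> 0 <= s x) &
      u%:E = EA xbar L f c s a].

Definition sup_ratio xbar L (f fa : R -> R -> R) (a : R) : \bar R :=
  ereal_sup [set (fa x a / f x a)%:E | x in supp_o xbar L a].

Definition Jset xbar L f fa (c dc : R -> R) (u0 : R) : set (R * R) :=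
  [set p | 0 < p.1 /\ u0 <= p.2 /\
           ((dc p.1 / (c p.1 + p.2))%:E <= sup_ratio xbar L f fa p.1)%E]
  `|` [set p | p.1 = 0 /\ u0 <= p.2].

Definition Jobj xbar L f (c : R -> R) (p : R * R) : \bar R :=
  (expect xbar L f id p.1 - (c p.1 + p.2)%:E)%E.

Definition quota_bonus (q b : R) (x : R) : R := if q <= x then b else 0.

Definition model_assumptions (xbar : \bar R) (L dL c dc ddc : R -> R)
    (f F fa Fa : R -> R -> R) : Prop :=
  (0%:E < xbar)%E /\
  [/\
   [/\ (forall a : R, 0 <= a -> 0 <= L a /\ ((L a)%:E < xbar)%E),
       (forall a b : R, 0 <= a -> a <= b -> L a <= L b),
       (forall a : R, 0 < a -> is_derive a 1 L (dL a)) &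
       {in `]0, +oo[, continuous dL}],
   [/\ (forall a : R, 0 <= a -> 0 <= c a),
       (forall a : R, 0 < a -> is_derive a 1 c (dc a) /\ is_derive a 1 dc (ddc a)),
       (h^-1 * (c h - c 0) @[h --> 0^'+] --> dc 0),
       (h^-1 * (dc h - dc 0) @[h --> 0^'+] --> ddc 0) &
       (forall a : R, 0 <= a -> 0 < dc a /\ 0 <= ddc a)],
   (* X(a): continuous r.v. with density f(.|a), cdf F(.|a), support [L(a), xbar] *)
   [/\ (forall a : R, 0 <= a -> measurable_fun setT (fun x => f x a)
                             /\ (forall x : R, 0 <= f x a)),
       (forall a x : R, 0 <= a -> ~ supp xbar L a x -> f x a = 0),
       (forall a x : R, 0 <= a -> supp_o xbar L a x -> 0 < f x a),
       (forall a : R, 0 <= a -> expect xbar L f (fun _ => 1) a = 1%E) &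
       (forall a x : R, 0 <= a ->
          (F x a)%:E = (\int[lebesgue_measure]_(t in `]-oo, x]) (f t a)%:E)%E)],
   [/\ (forall a x : R, 0 < a -> supp_o xbar L a x ->
          is_derive a 1 (fun b => f x b) (fa x a) /\
          is_derive a 1 (fun b => F x b) (Fa x a)),
       {in [set p : R * R | 0 < p.2 /\ supp_o xbar L p.2 p.1],
          continuous (fun p : R * R => fa p.1 p.2)},
       {in [set p : R * R | 0 < p.2 /\ supp_o xbar L p.2 p.1],
          continuous (fun p : R * R => Fa p.1 p.2)} &
       (forall a x : R, 0 < a -> supp_o xbar L a x -> Fa x a < 0)] &
   [/\ (forall a : R, 0 <= a -> expect xbar L f id a \is a fin_num),
       {in `[0, +oo[, continuous (fun a => fine (expect xbar L f id a))},
       ((expect xbar L f id a - (c a)%:E)%E @[a --> +oo] --> -oo%E),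
       {in `]0, +oo[, continuous (sup_ratio xbar L f fa)} &
       (forall (s : R -> R) (a : R), (forall x, 0 <= x -> 0 <= s x) -> 0 < a ->
          (expect xbar L f s a < +oo)%E ->
          ((\int[lebesgue_measure]_(x in supp xbar L a)
                       ((f x (a + h) - f x a) / h * s x)%:E)%E
            @[h --> 0^'-] --> (\int[lebesgue_measure]_(x in supp xbar L a)
                           (fa x a * s x)%:E)%E))]].

End Model.

From HB Require Import structures.
From mathcomp Require Import all_boot all_order all_algebra.
From mathcomp Require Import all_classical all_reals all_analysis.
From mathcomp Require Import ring lra measurable_realfun.
Import Order.TTheory GRing.Theory Num.Theory.
Import numFieldNormedType.Exports.
Set Implicit Arguments. Unset Strict Implicit. Unset Printing Implicit Defensive.
Local Open Scope classical_set_scope.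
Local Open Scope ring_scope.

(* Under the quota-bonus contract the agent's payoff is
   [b (1 - F(q|a)) - c(a)], and IC makes [a^J > 0] an interior maximiser of it.
   Since [c' > 0], [c] has no local minimum at a positive effort; hence
   [c(a^J) > 0], and [q < L(a^J)] is impossible, as [F(q|.)] would then vanish
   near [a^J] and leave [-c] with a local maximum there.  The identity
   [u^J = b (1 - F(q|a^J)) - c(a^J)] with [u^J >= u0 >= 0] gives [b] and
   [1 - F(q|a^J) > 0]; the latter puts [q] inside the support when
   [q > L(a^J)], where the first-order condition [-b F_a = c'] is the ratio
   identity. *)

Lemma derive_eq0_at_local_max (R : realFieldType) (f : R -> R) (c df : R) :
  is_derive c 1 f df ->
  (\forall t \near c, derivable f t 1 /\ f t <= f c) -> df = 0.
Proof.
move=> fdc /nbhs_ballP [e /= e0 near_c].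
have inball t : t \in `](c - e), (c + e)[ -> derivable f t 1 /\ f t <= f c.
  rewrite in_itv /= => /andP[? ?]; apply: near_c.
  by rewrite /ball /= ltr_norml; apply/andP; split; lra.
have [_ <-] : is_derive c 1 f 0.
  apply: (@derive1_at_max _ f (c - e) (c + e)) => [|t /inball []|
         |t /inball []] //; first lra.
  by rewrite in_itv /=; apply/andP; split; lra.
by rewrite derive_val.
Qed.

Lemma density_tail_integral (R : realType) (phi : R -> R) (q Fq : R) :
  measurable_fun setT phi -> (forall x, 0 <= phi x) ->
  (\int[@lebesgue_measure R]_(x in setT) (phi x)%:E = 1)%E ->
  Fq%:E = (\int[@lebesgue_measure R]_(t in `]-oo, q]) (phi t)%:E)%E ->
  (\int[@lebesgue_measure R]_(x in `[q, +oo[) (phi x)%:E)%E = (1 - Fq)%:E.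
Proof.
move=> mphi phi0 int1 FqE.
have mphiE := (measurable_EFinP _ phi).2 mphi.
rewrite -set_itvNyy (@itv_bndbnd_setU _ _ _ (BRight q)) // in int1.
rewrite ge0_integral_setU // in int1; last 3 first.
- exact: measurable_funTS.
- by move=> x _; rewrite lee_fin.
- apply/disj_setPS => x [] /=; rewrite !in_itv /= ?andbT => h1 h2.
  by move: (le_lt_trans h1 h2); rewrite ltxx.
rewrite -FqE integral_itv_obnd_cbnd in int1; last exact: measurable_funTS.
move: int1; case: (\int[_]_(x in _) _)%E => [r| |] //= /eqP.
by rewrite eqe => /eqP ?; congr EFin; lra.
Qed.

Lemma expect_setT (R : realType) (xbar : \bar R) (L : R -> R)
    (f : R -> R -> R) (g : R -> R) (a : R) :
  (forall x, ~ supp xbar L a x -> f x a = 0) ->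
  expect xbar L f g a = (\int[@lebesgue_measure R]_(x in setT) (g x * f x a)%:E)%E.
Proof.
move=> f0; rewrite /expect integral_mkcond; apply: eq_integral => x _.
rewrite patchE; case: ifPn => // /negP; rewrite inE => /f0 ->.
by rewrite mulr0.
Qed.

Lemma expect_quota_bonus (R : realType) (xbar : \bar R) (L : R -> R)
    (f : R -> R -> R) (a q b : R) :
  (forall x, ~ supp xbar L a x -> f x a = 0) ->
  measurable_fun setT (fun x => f x a) -> (forall x, 0 <= f x a) -> 0 <= b ->
  expect xbar L f (quota_bonus q b) a =
  (b%:E * \int[@lebesgue_measure R]_(x in `[q, +oo[) (f x a)%:E)%E.
Proof.
move=> f0 mf f_ge0 b0; rewrite expect_setT //.
rewrite -ge0_integralZl_EFin //; last 2 first.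
- by move=> x _; rewrite lee_fin.
- by apply: measurable_funTS; exact/measurable_EFinP.
rewrite [RHS]integral_mkcond; apply: eq_integral => x _.
rewrite patchE /quota_bonus mem_setE in_itv /= andbT.
by case: ifPn; rewrite ?mul0r.
Qed.

Section QuotaBonus.
Variables (R : realType) (xbar : \bar R) (L dL c dc ddc : R -> R).
Variables (f F fa Fa : R -> R -> R).
Hypothesis model : model_assumptions xbar L dL c dc ddc f F fa Fa.
Implicit Types a b q t : R.

Definition quota_payoff (q b t : R) : R := b * (1 - F q t) - c t.

Lemma tail_probability q a : 0 <= a ->
  (\int[@lebesgue_measure R]_(x in `[q, +oo[) (f x a)%:E)%E = (1 - F q a)%:E.
Proof.
have [_ [_ _ [f_mge0 f0 _ f1 F_int] _ _]] := model.
move=> a0; have [mf f_ge0] := f_mge0 a a0.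
apply: density_tail_integral => //; last exact: F_int.
rewrite -(f1 a a0) expect_setT; last by move=> x; apply: f0.
by apply: eq_integral => x _; rewrite mul1r.
Qed.

Lemma EA_quota_bonus q b a : 0 <= b -> 0 <= a ->
  EA xbar L f c (quota_bonus q b) a = (quota_payoff q b a)%:E.
Proof.
have [_ [_ _ [f_mge0 f0 _ _ _] _ _]] := model.
move=> b0 a0; have [mf f_ge0] := f_mge0 a a0.
by rewrite /EA expect_quota_bonus ?tail_probability // => x; apply: f0.
Qed.

Lemma cdf_eq0_below_support q a : 0 <= a -> q < L a -> F q a = 0.
Proof.
have [_ [_ _ [_ f0 _ _ F_int] _ _]] := model.
move=> a0 qL; apply/eqP; rewrite -(@eqe R) F_int //; apply/eqP.
apply: integral0_eq => x; rewrite /= in_itv /= => xq.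
by rewrite f0 // => -[Lx _]; move: (le_trans Lx xq); rewrite leNgt qL.
Qed.

Lemma cdf_eq1_above_support q a : 0 <= a -> (xbar < q%:E)%E -> F q a = 1.
Proof.
have [_ [_ _ [_ f0 _ _ _] _ _]] := model.
move=> a0 xq; apply/eqP; rewrite eq_sym -subr_eq0 -(@eqe R) -tail_probability //.
apply/eqP; apply: integral0_eq => x; rewrite /= in_itv /= andbT => qx.
rewrite f0 // => -[_ xb]; move: (le_lt_trans xb xq).
by rewrite lte_fin ltNge qx.
Qed.

Lemma support_bound_cvg a : 0 < a -> L t @[t --> a] --> L a.
Proof.
have [_ [[_ _ dL_L _] _ _ _ _]] := model.
move=> a0; apply: differentiable_continuous; apply/derivable1_diffP.
by case: (dL_L a a0).
Qed.

Lemma cost_no_local_min a : 0 < a -> ~ \forall t \near a, c a <= c t.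
Proof.
have [_ [_ [_ dc_c _ _ dc_gt0] _ _ _]] := model.
move=> a0 amin; have [dca _] := dc_c a a0.
have := (dc_gt0 a (ltW a0)).1; rewrite -oppr_lt0.
suff -> : - dc a = 0 by rewrite ltxx.
apply: (@derive_eq0_at_local_max _ (- c)); near=> t; split.
  have t0 : 0 < t by near: t; exact: lt_nbhsr.
  by have [dct _] := dc_c t t0; exact/derivableN.
by rewrite lerN2; near: t.
Unshelve. all: by end_near. Qed.

Lemma cost_gt0 a : 0 < a -> 0 < c a.
Proof.
have [_ [_ [c_ge0 _ _ _ _] _ _ _]] := model.
move=> a0; rewrite lt_def (c_ge0 _ (ltW a0)) andbT.
apply/eqP => ca0; apply: (cost_no_local_min a0).
near=> t; rewrite ca0; apply/c_ge0/ltW; near: t; exact: lt_nbhsr.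
Unshelve. all: by end_near. Qed.

Lemma is_derive_quota_payoff q b t : 0 < t -> supp_o xbar L t q ->
  is_derive t 1 (quota_payoff q b) (- b * Fa q t - dc t).
Proof.
have [_ [_ [_ dc_c _ _ _] _ [F_Fa _ _ _] _]] := model.
move=> t0 qt; have [_ dFt] := F_Fa t q t0 qt; have [dct _] := dc_c t t0.
have -> : quota_payoff q b = cst b + (- b) \*: (fun t => F q t) - c.
  apply/funext => s; rewrite /quota_payoff !fctE /=.
  by change (- b *: F q s) with (- b * F q s); ring.
rewrite -[- b * _]add0r; exact: is_derive_eq.
Qed.

Lemma quota_ge_support_bound a q b : 0 < a ->
  (forall t, 0 <= t -> quota_payoff q b t <= quota_payoff q b a) -> L a <= q.
Proof.
move=> a0 amax; rewrite leNgt; apply/negP => qL.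
apply: (cost_no_local_min a0); near=> t.
have t0 : 0 < t by near: t; exact: lt_nbhsr.
have qLt : q < L t by near: t; exact: cvgr_gt (support_bound_cvg a0) _ qL.
have := amax t (ltW t0); rewrite /quota_payoff.
rewrite (cdf_eq0_below_support (ltW t0) qLt).
by rewrite (cdf_eq0_below_support (ltW a0) qL); lra.
Unshelve. all: by end_near. Qed.

Lemma quota_payoff_first_order a q b : 0 < a ->
  (forall t, 0 <= t -> quota_payoff q b t <= quota_payoff q b a) ->
  L a < q -> 1 - F q a != 0 -> - b * Fa q a = dc a.
Proof.
move=> a0 amax Lq tail_ne0.
(* [F_a] is only assumed to exist on the support, so [q <= xbar] is needed. *)
have qx : (q%:E <= xbar)%E.
  rewrite leNgt; apply/negP => /(cdf_eq1_above_support (ltW a0)) F1.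
  by move: tail_ne0; rewrite F1 subrr eqxx.
suff : - b * Fa q a - dc a = 0 by lra.
apply: derive_eq0_at_local_max (is_derive_quota_payoff b a0 (conj Lq qx)) _.
near=> t.
have t0 : 0 < t by near: t; exact: lt_nbhsr.
have Ltq : L t < q by near: t; exact: cvgr_lt (support_bound_cvg a0) _ Lq.
split; last exact/amax/ltW.
by have [] := is_derive_quota_payoff b t0 (conj Ltq qx).
Unshelve. all: by end_near. Qed.
End QuotaBonus.

Theorem lemma1 (R : realType) (xbar : \bar R) (L dL c dc ddc : R -> R)
    (f F fa Fa : R -> R -> R) (u0 : R)
    (Hmodel : model_assumptions xbar L dL c dc ddc f F fa Fa)
    (Hu0 : 0 <= u0)
    (aJ uJ : R)
    (HJ : Jset xbar L f fa c dc u0 (aJ, uJ))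
    (Hmax : forall p, Jset xbar L f fa c dc u0 p ->
              (Jobj xbar L f c p <= Jobj xbar L f c (aJ, uJ))%E)
    (HaJ : 0 < aJ)
    (q b : R) (Hq : 0 <= q) (Hb : 0 <= b)
    (Himpl : implements xbar L f c u0 (quota_bonus q b) aJ uJ) :
  b = (c aJ + uJ) / (1 - F q aJ) /\
  (q = L aJ \/
   (L aJ < q /\ - Fa q aJ / (1 - F q aJ) = dc aJ / (c aJ + uJ))).
Proof.
have EA_payoff := EA_quota_bonus Hmodel q Hb.
have aJ0 := ltW HaJ.
case: Himpl => [[_ IC] IR _]; rewrite (EA_payoff _ aJ0) lee_fin in IR * => -[uJE].
have payoff_le t : 0 <= t -> quota_payoff c F q b t <= quota_payoff c F q b aJ.
  by move=> t0; have := IC t t0; rewrite (EA_payoff _ t0) (EA_payoff _ aJ0).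
have tail_gt0 : 0 < b * (1 - F q aJ).
  by have := cost_gt0 Hmodel HaJ; rewrite /quota_payoff in IR; lra.
have tail_ne0 : 1 - F q aJ != 0.
  by apply: contraTneq tail_gt0 => ->; rewrite mulr0 ltxx.
have b_ne0 : b != 0 by apply: contraTneq tail_gt0 => ->; rewrite mul0r ltxx.
have surplusE : c aJ + uJ = b * (1 - F q aJ).
  by rewrite uJE /quota_payoff addrC subrK.
split; first by rewrite surplusE mulfK.
have [qL|Lq|<-] := ltgtP q (L aJ); [exfalso | right | by left].
  by have := quota_ge_support_bound Hmodel HaJ payoff_le; rewrite leNgt qL.
split => //.
rewrite -(quota_payoff_first_order Hmodel HaJ payoff_le Lq tail_ne0) surplusE.
by field; rewrite tail_ne0 b_ne0.
Qed.
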